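(* Let $\tau,r,s,c_1$ be positive reals and $C_-\le C_+$, $C'_-\le C'_+$ real numbers, and let $x_0=\max\{e^{C'_+}s,\ e^{C_+}r\}$. For $x>x_0$ consider the inequality $$(\ast)\qquad \log^\tau\!\Big(\frac xr\Big)\frac{\left(1-\frac{C_+}{\log(x/r)}\right)^{\tau+1}}{1-\frac{C_-}{\log(x/r)}}\ge c_1\log^\tau\!\Big(\frac xs\Big)\frac{\left(1-\frac{C'_-}{\log(x/s)}\right)^{\tau+1}}{1-\frac{C'_+}{\log(x/s)}},$$ and put $$R(x)=\left[c_1\,\frac{1+\frac{C'_+-C'_-}{\log(x/s)-C'_+}}{1+\frac{C_--C_+}{\log(x/r)-C_-}}\right]^{1/\tau}.$$ (i) If $\log s+C'_-\le C_++\log r$ and $(\ast)$ holds for some $x_1>x_0$, then $(\ast)$ holds for every $x\ge x_1$. (ii) If $\log s+C'_->C_++\log r$ and $R(x_1)\le1$ for some $x_1>x_0$, then $(\ast)$ holds for every $x\ge x_1$. *)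

From Stdlib Require Import Reals.
Open Scope R_scope.

(* One side of the inequality [star], as a function of L = log(x/q):
     L^t * (1 - Ca/L)^(t+1) / (1 - Cb/L).
   For L > 0 this is literally the paper's expression (real powers of
   positive bases).  For L <= 0 (possible only when Ca < 0, since x > x0
   forces L > Ca) the paper's real powers of non-positive bases have no
   meaning; we use the algebraically equal expression
   (L - Ca)^(t+1) / (L - Cb), which is what the expression equals for L > 0
   and which is well defined for every L > Ca >= Cb. *)
Definition side (L Ca Cb t : R) : R :=
  if Rlt_dec 0 L
  then Rpower L t * Rpower (1 - Ca / L) (t + 1) / (1 - Cb / L)
  else Rpower (L - Ca) (t + 1) / (L - Cb).

Definition ineq_star (tau r s c1 Cm Cp Cm' Cp' x : R) : Prop :=
  side (ln (x / r)) Cp Cm tau >= c1 * side (ln (x / s)) Cm' Cp' tau.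

Definition x0 (r s Cp Cp' : R) : R := Rmax (exp Cp' * s) (exp Cp * r).

Definition Rfun (tau r s c1 Cm Cp Cm' Cp' x : R) : R :=
  Rpower
    (c1 * (1 + (Cp' - Cm') / (ln (x / s) - Cp'))
        / (1 + (Cm - Cp) / (ln (x / r) - Cm)))
    (1 / tau).

From Stdlib Require Import Reals Lra.
Open Scope R_scope.

(** With [L = log x], both sides of the inequality are quotients of powers of
    the margins [L - k], [k] among [log r + C_±] and [log s + C'_±], all
    positive for [x > x0].  Dividing by the right-hand side turns the
    inequality into [q(x)^tau * p(x) >= c1], where
    [q = (L - log r - C_+) / (L - log s - C'_-)] and [p] is a product of two
    ratios [u / (u + a)] with [u] a margin and [a >= 0].  These ratios grow
    with [L], so [p] is nondecreasing, and so is [q] when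
    [log s + C'_- <= C_+ + log r]: this gives (i).  Otherwise [q > 1], while
    [R(x)^tau = c1 / p(x)], so [R(x1) <= 1] means [p(x1) >= c1]: this
    gives (ii). *)

Lemma Rpower_pos (a c : R) : 0 < Rpower a c.
Proof. apply exp_pos. Qed.

Lemma Rpower_ge_1 (a c : R) : 0 <= c -> 1 <= a -> 1 <= Rpower a c.
Proof.
  intros Hc Ha. rewrite <- (Rpower_O a) by lra.
  now apply Rle_Rpower.
Qed.

Lemma Rpower_le_1_base (y c : R) : 0 < c -> Rpower y c <= 1 -> y <= 1.
Proof.
  intros Hc Hy. destruct (Rle_lt_dec y 1) as [|Hy1]; [assumption |].
  enough (Rpower y 0 < Rpower y c) by (rewrite Rpower_O in *; lra).
  now apply Rpower_lt.
Qed.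

Lemma Rpower_div_mul (a b c : R) :
  0 < a -> 0 < b -> Rpower (a / b) c * Rpower b c = Rpower a c.
Proof.
  intros Ha Hb. rewrite Rpower_mult_distr by (try apply Rdiv_lt_0_compat; lra).
  now replace (a / b * b) with a by (field; lra).
Qed.

Lemma Rpower_succ (a c : R) : 0 < a -> Rpower a (c + 1) = Rpower a c * a.
Proof. intros Ha. now rewrite Rpower_plus, Rpower_1. Qed.

Lemma div_add_le_div_add (u v a : R) :
  0 <= a -> 0 < u -> u <= v -> u / (u + a) <= v / (v + a).
Proof.
  intros Ha Hu Huv. apply Rmult_le_reg_r with ((u + a) * (v + a)); [nra |].
  field_simplify; nra.
Qed.

Lemma ln_le_compat (x y : R) : 0 < x -> x <= y -> ln x <= ln y.
Proof.
  intros Hx [Hxy | ->]; [left; now apply ln_increasing | lra].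
Qed.

Lemma ln_lt_of_exp_mul_lt (C q x : R) : 0 < q -> exp C * q < x -> ln q + C < ln x.
Proof.
  intros Hq Hx. assert (0 < exp C * q) by (apply Rmult_lt_0_compat; [apply exp_pos | lra]).
  apply ln_increasing in Hx; [| assumption].
  rewrite ln_mult, ln_exp in Hx by (try apply exp_pos; lra). lra.
Qed.

Lemma power_quotient_ge_iff (t c A A' B V : R) :
  0 < A -> 0 < A' -> 0 < B -> 0 < V ->
  Rpower A (t + 1) / A' >= c * (Rpower B (t + 1) / V) <->
  Rpower (A / B) t * (A / A' * (V / B)) >= c.
Proof.
  intros HA HA' HB HV.
  assert (HK : 0 < Rpower B (t + 1) / V) by (apply Rdiv_lt_0_compat; [apply Rpower_pos | lra]).
  replace (Rpower A (t + 1) / A')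
    with (Rpower (A / B) t * (A / A' * (V / B)) * (Rpower B (t + 1) / V))
    by (rewrite !Rpower_succ, <- (Rpower_div_mul A B t) by lra;
        pose proof (Rpower_pos B t); field; lra).
  split; intro H; apply Rle_ge.
  - apply Rmult_le_reg_r with (Rpower B (t + 1) / V); lra.
  - apply Rmult_le_compat_r; lra.
Qed.

Definition margin (k x : R) : R := ln x - k.

Lemma ln_div_sub_margin (q C x : R) :
  0 < q -> 0 < x -> ln (x / q) - C = margin (ln q + C) x.
Proof.
  intros Hq Hx. unfold margin, Rdiv.
  rewrite ln_mult, ln_Rinv by (try apply Rinv_0_lt_compat; lra). ring.
Qed.

Lemma margin_ratio_nondecreasing (k k' x1 x : R) :
  k <= k' -> 0 < x1 -> 0 < margin k' x1 -> x1 <= x ->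
  margin k' x1 / margin k x1 <= margin k' x / margin k x.
Proof.
  intros Hk Hx1 Hm Hx. pose proof (ln_le_compat x1 x Hx1 Hx).
  replace (margin k x1) with (margin k' x1 + (k' - k)) by (unfold margin; ring).
  replace (margin k x) with (margin k' x + (k' - k)) by (unfold margin; ring).
  apply div_add_le_div_add; unfold margin in *; lra.
Qed.

Lemma side_eq (L Ca Cb t : R) :
  Ca < L -> Cb < L -> side L Ca Cb t = Rpower (L - Ca) (t + 1) / (L - Cb).
Proof.
  intros HA HB. unfold side.
  destruct (Rlt_dec 0 L) as [HL | HL]; [| reflexivity].
  replace (1 - Ca / L) with ((L - Ca) / L) by (field; lra).
  replace (1 - Cb / L) with ((L - Cb) / L) by (field; lra).
  rewrite <- (Rpower_div_mul (L - Ca) L (t + 1)), (Rpower_succ L) by lra.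
  pose proof (Rpower_pos L t). pose proof (Rpower_pos ((L - Ca) / L) (t + 1)).
  field; lra.
Qed.

Section Star.

Variables (tau r s c1 Cm Cp Cm' Cp' : R).
Hypotheses (Htau : 0 < tau) (Hr : 0 < r) (Hs : 0 < s)
  (HC : Cm <= Cp) (HC' : Cm' <= Cp').

Definition lead_ratio (x : R) : R := margin (ln r + Cp) x / margin (ln s + Cm') x.

Definition tail_ratio (x : R) : R :=
  margin (ln r + Cp) x / margin (ln r + Cm) x *
  (margin (ln s + Cp') x / margin (ln s + Cm') x).

Lemma margins_pos_of_gt_x0 (x : R) : x > x0 r s Cp Cp' ->
  0 < x /\ 0 < margin (ln r + Cp) x /\ 0 < margin (ln s + Cp') x.
Proof.
  unfold x0. intros [Hs' Hr']%Rmax_Rlt.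
  assert (0 < exp Cp * r) by (apply Rmult_lt_0_compat; [apply exp_pos | lra]).
  assert (0 < x) by lra.
  apply ln_lt_of_exp_mul_lt in Hs'; [| assumption].
  apply ln_lt_of_exp_mul_lt in Hr'; [| assumption].
  unfold margin. repeat split; lra.
Qed.

Lemma lead_ratio_pos (x : R) : x > x0 r s Cp Cp' -> 0 < lead_ratio x.
Proof.
  intros (_ & HA & HV)%margins_pos_of_gt_x0.
  unfold lead_ratio, margin in *. apply Rdiv_lt_0_compat; lra.
Qed.

Lemma tail_ratio_pos (x : R) : x > x0 r s Cp Cp' -> 0 < tail_ratio x.
Proof.
  intros (_ & HA & HV)%margins_pos_of_gt_x0.
  unfold tail_ratio, margin in *.
  apply Rmult_lt_0_compat; apply Rdiv_lt_0_compat; lra.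
Qed.

Lemma ineq_star_iff (x : R) : x > x0 r s Cp Cp' ->
  ineq_star tau r s c1 Cm Cp Cm' Cp' x <->
  Rpower (lead_ratio x) tau * tail_ratio x >= c1.
Proof.
  intros Hx. pose proof (margins_pos_of_gt_x0 x Hx) as (Hx0 & HA & HV).
  unfold ineq_star, lead_ratio, tail_ratio.
  rewrite !side_eq
    by (apply Rlt_0_minus; rewrite ln_div_sub_margin by lra; unfold margin in *; lra).
  rewrite !ln_div_sub_margin by lra.
  apply power_quotient_ge_iff; unfold margin in *; lra.
Qed.

Lemma tail_ratio_nondecreasing (x1 x : R) :
  x1 > x0 r s Cp Cp' -> x1 <= x -> tail_ratio x1 <= tail_ratio x.
Proof.
  intros Hx1 Hx. pose proof (margins_pos_of_gt_x0 x1 Hx1) as (Hx1' & HA & HV).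
  unfold tail_ratio. apply Rmult_le_compat.
  - unfold margin in *. apply Rlt_le, Rdiv_lt_0_compat; lra.
  - unfold margin in *. apply Rlt_le, Rdiv_lt_0_compat; lra.
  - apply margin_ratio_nondecreasing; lra.
  - apply margin_ratio_nondecreasing; lra.
Qed.

Lemma lead_ratio_nondecreasing (x1 x : R) : ln s + Cm' <= Cp + ln r ->
  x1 > x0 r s Cp Cp' -> x1 <= x -> lead_ratio x1 <= lead_ratio x.
Proof.
  intros Hk Hx1 Hx. pose proof (margins_pos_of_gt_x0 x1 Hx1) as (Hx1' & HA & _).
  apply margin_ratio_nondecreasing; lra.
Qed.

Lemma lead_ratio_gt_1 (x : R) : ln s + Cm' > Cp + ln r ->
  x > x0 r s Cp Cp' -> 1 < lead_ratio x.
Proof.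
  intros Hk Hx. pose proof (margins_pos_of_gt_x0 x Hx) as (_ & _ & HV).
  unfold lead_ratio, margin in *.
  apply Rmult_lt_reg_r with (ln x - (ln s + Cm')); [lra |].
  field_simplify; lra.
Qed.

Lemma Rfun_le_1_tail_ratio (x : R) : x > x0 r s Cp Cp' ->
  Rfun tau r s c1 Cm Cp Cm' Cp' x <= 1 -> c1 <= tail_ratio x.
Proof.
  intros Hx HR. pose proof (margins_pos_of_gt_x0 x Hx) as (Hx0 & HA & HV).
  pose proof (tail_ratio_pos x Hx) as Htail.
  unfold Rfun in HR.
  rewrite !ln_div_sub_margin in HR by lra.
  replace (c1 * (1 + (Cp' - Cm') / margin (ln s + Cp') x)
              / (1 + (Cm - Cp) / margin (ln r + Cm) x))
    with (c1 / tail_ratio x) in HR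
    by (unfold tail_ratio, margin in *; field; lra).
  apply Rpower_le_1_base in HR; [| apply Rdiv_lt_0_compat; lra].
  apply Rmult_le_reg_r with (/ tail_ratio x); [now apply Rinv_0_lt_compat |].
  rewrite Rinv_r by lra. exact HR.
Qed.

Lemma ineq_star_propagates (x1 : R) : ln s + Cm' <= Cp + ln r ->
  x1 > x0 r s Cp Cp' -> ineq_star tau r s c1 Cm Cp Cm' Cp' x1 ->
  forall x, x >= x1 -> ineq_star tau r s c1 Cm Cp Cm' Cp' x.
Proof.
  intros Hk Hx1 Hstar x Hx.
  rewrite ineq_star_iff in Hstar |- * by lra.
  apply Rle_ge, Rle_trans with (1 := Rge_le _ _ Hstar).
  pose proof (lead_ratio_pos x1 Hx1). pose proof (tail_ratio_pos x1 Hx1).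
  apply Rmult_le_compat.
  - apply Rlt_le, Rpower_pos.
  - lra.
  - apply Rle_Rpower_l; [lra |].
    split; [assumption | apply lead_ratio_nondecreasing; lra].
  - apply tail_ratio_nondecreasing; lra.
Qed.

Lemma ineq_star_of_Rfun_le_1 (x1 : R) : ln s + Cm' > Cp + ln r ->
  x1 > x0 r s Cp Cp' -> Rfun tau r s c1 Cm Cp Cm' Cp' x1 <= 1 ->
  forall x, x >= x1 -> ineq_star tau r s c1 Cm Cp Cm' Cp' x.
Proof.
  intros Hk Hx1 HR x Hx.
  assert (Hx' : x > x0 r s Cp Cp') by lra.
  rewrite ineq_star_iff by assumption.
  pose proof (Rfun_le_1_tail_ratio x1 Hx1 HR) as Hc1x1.
  pose proof (tail_ratio_nondecreasing x1 x Hx1 ltac:(lra)) as Htail.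
  pose proof (Rpower_ge_1 (lead_ratio x) tau ltac:(lra)
                (Rlt_le _ _ (lead_ratio_gt_1 x Hk Hx'))) as Hlead.
  pose proof (tail_ratio_pos x Hx').
  apply Rle_ge, Rle_trans with (tail_ratio x); [lra |].
  rewrite <- (Rmult_1_l (tail_ratio x)) at 1.
  apply Rmult_le_compat_r; lra.
Qed.

End Star.

Theorem lemma14 (tau r s c1 Cm Cp Cm' Cp' : R)
  (Htau : 0 < tau) (Hr : 0 < r) (Hs : 0 < s) (Hc1 : 0 < c1)
  (HC : Cm <= Cp) (HC' : Cm' <= Cp') :
  ( ln s + Cm' <= Cp + ln r ->
    forall x1, x1 > x0 r s Cp Cp' ->
    ineq_star tau r s c1 Cm Cp Cm' Cp' x1 ->
    forall x, x >= x1 -> ineq_star tau r s c1 Cm Cp Cm' Cp' x )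
  /\
  ( ln s + Cm' > Cp + ln r ->
    forall x1, x1 > x0 r s Cp Cp' ->
    Rfun tau r s c1 Cm Cp Cm' Cp' x1 <= 1 ->
    forall x, x >= x1 -> ineq_star tau r s c1 Cm Cp Cm' Cp' x ).
Proof.
  split; intros Hk x1.
  - exact (ineq_star_propagates tau r s c1 Cm Cp Cm' Cp' Htau Hr Hs HC HC' x1 Hk).
  - exact (ineq_star_of_Rfun_le_1 tau r s c1 Cm Cp Cm' Cp' Htau Hr Hs HC HC' x1 Hk).
Qed.
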